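(* Let $0<p<2$. For each $N\ge 2$ let $X_N=\{x_1,\dots,x_N\}\in S(N,2)$ be a minimizer of $\mathrm{FP}_{p,N,2}$ over $S(N,2)$, and regard $X_N$ as the $2\times N$ matrix whose columns are $x_1,\dots,x_N$. Then $$\lim_{N\to\infty}\frac{1}{N}X_NX_N^T=\frac{1}{2}I_2.$$ In particular, $\|X_NX_N^T-\frac{N}{2}I_2\|=o(N)$ as $N\to\infty$.
   Context: $S(N,2)$ denotes the collection of all ordered multisets of $N$ unit-norm vectors in $\mathbb{R}^2$, and for $0<p<\infty$, $\mathrm{FP}_{p,N,2}(X)=\sum_{k=1}^N\sum_{\ell\neq k}|\langle x_k,x_\ell\rangle|^p$. $I_2$ is the $2\times 2$ identity matrix. *)

From HB Require Import structures.
From mathcomp Require Import all_boot all_order all_algebra.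
From mathcomp Require Import all_classical all_reals all_analysis.
Set Implicit Arguments. Unset Strict Implicit. Unset Printing Implicit Defensive.
Import Order.TTheory GRing.Theory Num.Theory.
Import numFieldNormedType.Exports.
Local Open Scope ring_scope.

Definition colinner (R : realType) (N : nat) (X : 'M[R]_(2, N)) (k l : 'I_N) : R :=
  \sum_(i < 2) X i k * X i l.

Definition colnorm (R : realType) (N : nat) (X : 'M[R]_(2, N)) (k : 'I_N) : R :=
  Num.sqrt (colinner X k k).

Definition S_N2 (R : realType) (N : nat) : set 'M[R]_(2, N) :=
  [set X | forall k : 'I_N, colnorm X k = 1].

Definition FP (R : realType) (p : R) (N : nat) (X : 'M[R]_(2, N)) : R :=
  \sum_(k < N) \sum_(l < N | l != k) (`|colinner X k l| `^ p).

Definition FP_minimizer (R : realType) (p : R) (N : nat) (X : 'M[R]_(2, N)) : Prop :=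
  @S_N2 R N X /\ (forall Y : 'M[R]_(2, N), @S_N2 R N Y -> FP p X <= FP p Y).

(* For unit vectors |<x_k, x_l>| <= 1, so |<x_k, x_l>|^p >= <x_k, x_l>^2 when
   p <= 2 and hence N + FP_p(X) >= |X^T X|_F^2 = |X X^T|_F^2.  Since
   tr(X X^T) = N, the latter equals N^2/2 + |X X^T - N/2 I|_F^2.  The
   configuration alternating between e_1 and e_2 has inner products 0 and 1
   only, so it attains equality, and its deviation from N/2 I has squared
   Frobenius norm at most 1/2.  Comparing a minimizer with it gives
   |X X^T - N/2 I|_F^2 <= 1/2 for every N, far better than o(N). *)

From HB Require Import structures.
From mathcomp Require Import all_boot all_order all_algebra.
From mathcomp Require Import all_classical all_reals all_analysis.
From mathcomp Require Import ring lra.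

Set Implicit Arguments.
Unset Strict Implicit.
Unset Printing Implicit Defensive.

Import Order.TTheory GRing.Theory Num.Theory.
Import numFieldNormedType.Exports.
Local Open Scope classical_set_scope.
Local Open Scope ring_scope.

Section Frobenius.
Variable R : realType.

Definition sqfrob (m n : nat) (A : 'M[R]_(m, n)) : R :=
  \sum_i \sum_j A i j ^+ 2.

Lemma sqfrob_mxtrace m n (A : 'M[R]_(m, n)) : sqfrob A = \tr (A *m A^T).
Proof.
by apply: eq_bigr => i _; rewrite !mxE; apply: eq_bigr => j _; rewrite !mxE expr2.
Qed.

Lemma sqfrob_gramC m n (X : 'M[R]_(m, n)) : sqfrob (X^T *m X) = sqfrob (X *m X^T).
Proof.
by rewrite !sqfrob_mxtrace !trmx_mul !trmxK !mulmxA mxtrace_mulC !mulmxA.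
Qed.

Lemma sqfrob_sub_scalar n (A : 'M[R]_n) (c : R) :
  sqfrob (A - c%:M) = sqfrob A - 2 * c * \tr A + n%:R * c ^+ 2.
Proof.
rewrite !sqfrob_mxtrace linearB /= tr_scalar_mx mulmxBl !mulmxBr.
rewrite mul_mx_scalar mul_scalar_mx.
rewrite -scalar_mxM !raddfB /= !mxtraceZ mxtrace_tr mxtrace_scalar -mulr_natl.
ring.
Qed.

Lemma sqr_entry_le_sqfrob m n (A : 'M[R]_(m, n)) i j : A i j ^+ 2 <= sqfrob A.
Proof.
rewrite /sqfrob (bigD1 i) //= (bigD1 j) //= -addrA lerDl.
by rewrite addr_ge0 // sumr_ge0 // => *; rewrite ?sumr_ge0 // => *; rewrite sqr_ge0.
Qed.

Lemma sqfrob_le1_norm m n (A : 'M[R]_(m, n)) : sqfrob A <= 1 -> `|A| <= 1.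
Proof.
move=> A1; rewrite [`|A|]mx_normrE; apply: bigmax_le => // [[i j]] _ /=.
rewrite -(expr_le1 (_ : 0 < 2)%N) // real_normK ?num_real //.
exact: le_trans (sqr_entry_le_sqfrob _ _ _) A1.
Qed.

End Frobenius.

Section UnitVectorsInPlane.
Variable R : realType.

Lemma sum_ord2 (f : 'I_2 -> R) : \sum_(i < 2) f i = f 0 + f 1.
Proof. by rewrite big_ord_recl big_ord1; congr (_ + f _); apply: val_inj. Qed.

Lemma sqfrob2 (A : 'M[R]_2) :
  sqfrob A = A 0 0 ^+ 2 + A 0 1 ^+ 2 + (A 1 0 ^+ 2 + A 1 1 ^+ 2).
Proof. by rewrite /sqfrob !sum_ord2. Qed.

Variables (N : nat) (X : 'M[R]_(2, N)).

Lemma colinner_gram k l : colinner X k l = (X^T *m X) k l.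
Proof. by rewrite mxE; apply: eq_bigr => i _; rewrite mxE. Qed.

Hypothesis unitX : S_N2 X.

Lemma colinner_diag k : colinner X k k = 1.
Proof.
have := unitX k; rewrite /colnorm => /(congr1 (fun x => x ^+ 2)).
by rewrite sqr_sqrtr ?expr1n // /colinner sum_ord2 addr_ge0 // -expr2 sqr_ge0.
Qed.

(* Lagrange's identity |x|^2 |y|^2 = <x, y>^2 + det(x, y)^2 gives Cauchy-Schwarz. *)
Lemma norm_colinner_le1 k l : `|colinner X k l| <= 1.
Proof.
have := colinner_diag k; have := colinner_diag l.
rewrite -(expr_le1 (_ : 0 < 2)%N) // real_normK ?num_real // /colinner !sum_ord2.
have := sqr_ge0 (X 0 k * X 1 l - X 1 k * X 0 l); nra.
Qed.

Lemma trace_gram : \tr (X *m X^T) = N%:R.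
Proof.
rewrite mxtrace_mulC -[N in RHS]card_ord -sumr_const.
by apply: eq_bigr => k _; rewrite -colinner_gram colinner_diag.
Qed.

Lemma sqfrob_gram :
  sqfrob (X *m X^T) = N%:R + \sum_k \sum_(l | l != k) colinner X k l ^+ 2.
Proof.
rewrite -sqfrob_gramC -[N in N%:R]card_ord -sumr_const -big_split /=.
apply: eq_bigr => k _; rewrite (bigD1 k) //= -!colinner_gram colinner_diag expr1n.
by congr (_ + _); apply: eq_bigr => l _; rewrite colinner_gram.
Qed.

Lemma sqfrob_gram_dev :
  sqfrob (X *m X^T) = sqfrob (X *m X^T - (N%:R / 2)%:M) + N%:R ^+ 2 / 2.
Proof. by rewrite sqfrob_sub_scalar trace_gram; field. Qed.

End UnitVectorsInPlane.

Section FramePotential.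
Variables (R : realType) (p : R).

Lemma sqr_le_powR_norm (c : R) : p <= 2 -> `|c| <= 1 -> c ^+ 2 <= `|c| `^ p.
Proof.
move=> p2 c1; have [->|c0] := eqVneq c 0; first by rewrite expr0n powR_ge0.
rewrite -real_normK ?num_real // -powR_mulrn //.
by apply: ger_powR; rewrite ?normr_gt0 ?c0.
Qed.

Lemma sqfrob_gram_le_FP N (X : 'M[R]_(2, N)) :
  p <= 2 -> S_N2 X -> sqfrob (X *m X^T) <= N%:R + FP p X.
Proof.
move=> p2 unitX; rewrite sqfrob_gram // lerD2l.
apply: ler_sum => k _; apply: ler_sum => l _.
exact/sqr_le_powR_norm/norm_colinner_le1.
Qed.

Definition alt_config N : 'M[R]_(2, N) :=
  \matrix_(i < 2, k < N) (i == odd k :> nat)%:R.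

Lemma colinner_alt_config N (k l : 'I_N) :
  colinner (alt_config N) k l = (odd k == odd l)%:R.
Proof.
rewrite /colinner sum_ord2 !mxE.
by case: (odd k); case: (odd l); rewrite /= ?mulr0 ?mul0r ?mulr1 ?addr0 ?add0r.
Qed.

Lemma alt_config_S_N2 N : S_N2 (alt_config N).
Proof. by move=> k; rewrite /colnorm colinner_alt_config eqxx sqrtr1. Qed.

Lemma FP_alt_config N : 0 < p ->
  N%:R + FP p (alt_config N) = sqfrob (alt_config N *m (alt_config N)^T).
Proof.
move=> p0; rewrite sqfrob_gram; last exact: alt_config_S_N2.
congr (_ + _).
apply: eq_bigr => k _; apply: eq_bigr => l _; rewrite colinner_alt_config.
by case: (_ == _); rewrite ?normr1 ?powR1 ?expr1n ?normr0 ?powR0 ?gt_eqF // expr0n.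
Qed.

Lemma sum_parity_dev (m : nat) N : (m < 2)%N ->
  \sum_(k < N) ((m == odd k)%:R - 2^-1 : R) = (odd N)%:R * ((m == 0)%:R - 2^-1).
Proof.
move=> m2; elim: N => [|N IH]; first by rewrite big_ord0 mul0r.
rewrite big_ord_recr /= IH; case: (odd N); case: m m2 {IH} => [|[|//]] _ /=; lra.
Qed.

Lemma alt_config_gram_dev N (i j : 'I_2) :
  (alt_config N *m (alt_config N)^T - (N%:R / 2)%:M) i j =
  (i == j)%:R * ((odd N)%:R * (((i : nat) == 0)%:R - 2^-1)).
Proof.
rewrite -sum_parity_dev // !mxE sumrB sumr_const card_ord mulrBr mulr_sumr; congr (_ - _).
  apply: eq_bigr => k _; rewrite !mxE.
  have [e|_] := eqVneq (i : nat) (odd k); last by rewrite mul0r mulr0.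
  by rewrite mul1r mulr1 -val_eqE /= e eq_sym.
by rewrite -[N%:R / 2 *+ _]mulr_natl -[2^-1 *+ N]mulr_natl.
Qed.

Lemma sqfrob_alt_config_dev N :
  sqfrob (alt_config N *m (alt_config N)^T - (N%:R / 2)%:M) <= 2^-1.
Proof. by rewrite sqfrob2 !alt_config_gram_dev /=; case: (odd N) => /=; lra. Qed.

End FramePotential.

Lemma minimizer_sqfrob_gram_dev (R : realType) (p : R) N (X : 'M[R]_(2, N)) :
  0 < p -> p <= 2 -> FP_minimizer p X ->
  sqfrob (X *m X^T - (N%:R / 2)%:M) <= 2^-1.
Proof.
move=> p0 p2 [unitX minX].
have := sqfrob_gram_le_FP p2 unitX; have := minX _ (@alt_config_S_N2 R N).
have := FP_alt_config N p0; have := sqfrob_alt_config_dev R N.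
rewrite (sqfrob_gram_dev unitX) (sqfrob_gram_dev (@alt_config_S_N2 R N)); lra.
Qed.

Section BoundedSequences.
Variables (R : realType) (V : normedModType R) (f : nat -> V) (C : R).
Hypothesis f_bounded : \forall N \near \oo, `|f N| <= C.

Let eventually_bound_le (e : R) : 0 < e -> \forall N \near \oo, `|f N| <= e * N%:R.
Proof.
move=> e0; near=> N; apply: le_trans (_ : C <= _); first by near: N.
by rewrite -ler_pdivrMl //; near: N; exact: nbhs_infty_ger.
Unshelve. all: by end_near. Qed.

Lemma bounded_eqo_natr : f =o_\oo (fun N => N%:R : R).
Proof.
apply/eqoP => e e0; near=> N; rewrite normr_nat.
by near: N; exact: eventually_bound_le.
Unshelve. all: by end_near. Qed.

Lemma bounded_scale_invn_cvg0 : (fun N => N%:R^-1 *: f N) @ \oo --> (0 : V).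
Proof.
apply/cvgrPdist_le => e e0; near=> N; rewrite sub0r normrN normrZ.
have N0 : (0 < N)%N by near: N; exact: nbhs_infty_gt.
rewrite ger0_norm ?invr_ge0 // ler_pdivrMl ?ltr0n // mulrC.
by near: N; exact: eventually_bound_le.
Unshelve. all: by end_near. Qed.

End BoundedSequences.

Theorem theorem3p2 (R : realType) (p : R) (hp0 : 0 < p) (hp2 : p < 2)
  (X : forall N : nat, 'M[R]_(2, N))
  (hX : forall N : nat, (2 <= N)%N -> FP_minimizer p (X N)) :
  ((fun N : nat => N%:R^-1 *: (X N *m (X N)^T)) @ \oo --> (2^-1 : R)%:M)
  /\
  ((fun N : nat => X N *m (X N)^T - (N%:R / 2 : R)%:M) =o_\oo (fun N : nat => N%:R : R)).
Proof.
have dev_le1 : \forall N \near \oo, `|X N *m (X N)^T - (N%:R / 2)%:M| <= 1.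
  near=> N; apply: sqfrob_le1_norm.
  apply: le_trans (minimizer_sqfrob_gram_dev hp0 (ltW hp2) (hX N _)) _; last lra.
  by near: N; exact: nbhs_infty_ge.
split; last exact: bounded_eqo_natr dev_le1.
rewrite -[l in _ --> l]add0r.
apply: cvg_trans (cvgD (bounded_scale_invn_cvg0 dev_le1) (cvg_cst _)).
apply: near_eq_cvg; near=> N.
have N0 : (N%:R : R) != 0 by rewrite pnatr_eq0 -lt0n; near: N; exact: nbhs_infty_gt.
rewrite !fctE scalerBr scale_scalar_mx mulrA mulVf // mul1r subrK.
Unshelve. all: by end_near. Qed.
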